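(* Let $m>6C^2(C+1)$ and $l_m=\lfloor\frac{m-2}{C+1}\rfloor$. If $\sum_{i=1}^n a_iP_m(x_i)$ is a leaf of the escalator tree of $m$-gonal forms with $n\ge l_m$ and $a_{l_m}\ge C+1$, then $$n\le \left(1-\frac{1}{(C+1)^2}\right)(m-2)+\frac{C+2}{C+1}.$$
   Context: For an integer $m\ge 3$ and $x\in\mathbb Z$ put $P_m(x)=\frac{m-2}{2}x^2-\frac{m-4}{2}x$. An $m$-gonal form of rank $n$ is $a_1P_m(x_1)+\cdots+a_nP_m(x_n)$ with positive integers $a_1\le\cdots\le a_n$ and $x_i\in\mathbb Z$; it represents $N$ if $N$ is a value at some integer vector, and is universal if it represents every positive integer. The truant of a non-universal form is the smallest positive integer it does not represent (the empty form has truant $1$). The escalator tree of $m$-gonal forms is the rooted tree whose root is the empty form; a universal node is a leaf, and a non-universal node $\sum_{i=1}^k a_iP_m(x_i)$ has as children exactly all forms $\sum_{i=1}^{k+1}a_iP_m(x_i)$ with $a_{k+1}\ge a_k$ (any $a_1\ge1$ if $k=0$) that represent the truant of the node. Standing assumption: $C$ is a fixed absolute constant such that for every $m\ge3$, every $m$-gonal form that represents every positive integer in $[1,C(m-2)]$ is universal. *)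

From Stdlib Require Import Reals ZArith List Lia.
Import ListNotations.
Open Scope R_scope.

(* P_m(x) = ((m-2) x^2 - (m-4) x) / 2 ; the numerator is always even. *)
Definition Pm (m : nat) (x : Z) : Z :=
  (((Z.of_nat m - 2) * x * x - (Z.of_nat m - 4) * x) / 2)%Z.

Definition is_form (a : list nat) : Prop :=
  (forall k, In k a -> (0 < k)%nat) /\
  (forall i, (S i < length a)%nat -> (nth i a 0 <= nth (S i) a 0)%nat).

Fixpoint form_value (m : nat) (a : list nat) (x : list Z) : Z :=
  match a, x with
  | ak :: a', xk :: x' => (Z.of_nat ak * Pm m xk + form_value m a' x')%Z
  | _, _ => 0%Z
  end.

Definition represents (m : nat) (a : list nat) (N : nat) : Prop :=
  exists x : list Z, length x = length a /\ form_value m a x = Z.of_nat N.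

Definition universal (m : nat) (a : list nat) : Prop :=
  forall N : nat, (0 < N)%nat -> represents m a N.

Definition is_truant (m : nat) (a : list nat) (t : nat) : Prop :=
  (0 < t)%nat /\ ~ represents m a t /\
  (forall k, (0 < k < t)%nat -> represents m a k).

Inductive escalator_node (m : nat) : list nat -> Prop :=
  | esc_root : escalator_node m []
  | esc_child : forall (a : list nat) (t b : nat),
      escalator_node m a ->
      ~ universal m a ->
      is_truant m a t ->
      (1 <= b)%nat ->
      (forall k, In k a -> (k <= b)%nat) ->
      represents m (a ++ [b]) t ->
      escalator_node m (a ++ [b]).

Definition escalator_leaf (m : nat) (a : list nat) : Prop :=
  escalator_node m a /\ universal m a.

Definition standing_assumption (C : R) : Prop :=
  forall (m : nat) (a : list nat), (3 <= m)%nat -> is_form a ->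
    (forall N : nat, (1 <= N)%nat -> INR N <= C * (INR m - 2) -> represents m a N) ->
    universal m a.

Definition l_m (C : R) (m : nat) : nat := Z.to_nat (Int_part ((INR m - 2) / (C + 1))).

From Stdlib Require Import Reals ZArith List.
From Stdlib Require Import Lia Lra Classical.
Import ListNotations.
Open Scope R_scope.

(* A leaf a of length n+1 is a child a' ++ [b] of a non-universal
   node a' of length n.  By the standing assumption a' misses some N with
   1 <= N <= C(m-2).  On the other hand every escalator node represents every
   integer in [1, sum of its coefficients] (each new coefficient is at most the
   truant, which exceeds the previous coefficient sum), so sum a' < N.
   Since the coefficients are >= 1 and, from index l_m - 1 on, >= C+1, we get
   sum a' >= n(C+1) - l_m C, while l_m (C+1) <= m-2 by definition of the floor.
   Combining the three inequalities gives the bound by real arithmetic. *)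

(* The numerator of P_m is nonnegative for m >= 3, as
   (M-2)z^2 - (M-4)z = (M-3)z(z-1) + z(z+1). *)
Lemma polygonal_numerator_nonneg (M z : Z) : (3 <= M)%Z ->
  (0 <= (M - 2) * z * z - (M - 4) * z)%Z.
Proof.
  intro HM.
  assert (Hl : (0 <= z * (z - 1))%Z) by nia.
  assert (Hr : (0 <= z * (z + 1))%Z) by nia.
  replace ((M - 2) * z * z - (M - 4) * z)%Z
    with ((M - 3) * (z * (z - 1)) + z * (z + 1))%Z by ring.
  nia.
Qed.

Lemma Pm_nonneg (m : nat) (z : Z) : (3 <= m)%nat -> (0 <= Pm m z)%Z.
Proof.
  intro Hm. unfold Pm. apply Z.div_pos; [|lia].
  apply polygonal_numerator_nonneg. lia.
Qed.

Lemma Pm_0 (m : nat) : Pm m 0 = 0%Z.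
Proof. unfold Pm. rewrite !Z.mul_0_r. reflexivity. Qed.

Lemma Pm_1 (m : nat) : Pm m 1 = 1%Z.
Proof.
  unfold Pm.
  replace ((Z.of_nat m - 2) * 1 * 1 - (Z.of_nat m - 4) * 1)%Z with 2%Z by ring.
  reflexivity.
Qed.

Lemma form_value_nonneg (m : nat) (a : list nat) (x : list Z) :
  (3 <= m)%nat -> (0 <= form_value m a x)%Z.
Proof.
  intro Hm. revert x; induction a as [|k a IH]; intros [|z x]; simpl; try lia.
  pose proof (IH x). pose proof (Pm_nonneg m z Hm). nia.
Qed.

Lemma form_value_app (m : nat) (a : list nat) (b : nat) (x : list Z) (z : Z) :
  length x = length a ->
  form_value m (a ++ [b]) (x ++ [z]) = (form_value m a x + Z.of_nat b * Pm m z)%Z.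
Proof.
  revert x; induction a as [|k a IH]; intros [|y x] H; simpl in *; try discriminate.
  - lia.
  - rewrite IH by lia. lia.
Qed.

Lemma represents_0 (m : nat) (a : list nat) : represents m a 0.
Proof.
  exists (repeat 0%Z (length a)). split; [apply repeat_length|].
  induction a as [|k a IH]; simpl; auto. rewrite IH, Pm_0. lia.
Qed.

Lemma represents_app_0 (m : nat) (a : list nat) (b N : nat) :
  represents m a N -> represents m (a ++ [b]) N.
Proof.
  intros [x [Hl Hv]]. exists (x ++ [0%Z]). split.
  - rewrite !length_app; simpl; lia.
  - rewrite form_value_app by auto. rewrite Pm_0. lia.
Qed.

Lemma represents_app_1 (m : nat) (a : list nat) (b N : nat) :
  represents m a N -> represents m (a ++ [b]) (N + b).
Proof.
  intros [x [Hl Hv]]. exists (x ++ [1%Z]). split.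
  - rewrite !length_app; simpl; lia.
  - rewrite form_value_app by auto. rewrite Pm_1. lia.
Qed.

(* A coefficient b > N cannot contribute to representing N, since every
   nonzero value of P_m is at least 1. *)
Lemma represents_app_large (m : nat) (a : list nat) (b N : nat) :
  (3 <= m)%nat -> (N < b)%nat -> represents m (a ++ [b]) N -> represents m a N.
Proof.
  intros Hm HNb [x [Hl Hv]].
  rewrite length_app in Hl. simpl in Hl.
  assert (Hx : x <> []) by (intros E; rewrite E in Hl; simpl in Hl; lia).
  destruct (exists_last Hx) as [x' [z Ex]]; subst x.
  rewrite length_app in Hl. simpl in Hl.
  rewrite form_value_app in Hv by lia.
  pose proof (form_value_nonneg m a x' Hm). pose proof (Pm_nonneg m z Hm).
  exists x'. split; [lia|].
  destruct (Z.eq_dec (Pm m z) 0) as [E|E]; [rewrite E in Hv; lia | nia].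
Qed.

(* Inductively the truant t exceeds the coefficient sum of the
   parent and the new coefficient b is at most t; each N in the new range is
   either below t or of the form (N - b) + b with N - b below t. *)
Lemma escalator_node_covers (m : nat) (a : list nat) :
  (3 <= m)%nat -> escalator_node m a ->
  forall N, (1 <= N <= list_sum a)%nat -> represents m a N.
Proof.
  intros Hm Hnode.
  induction Hnode as [|a t b Hnode IH _ [Ht0 [Htn Htr]] _ _ Hrep]; intros N HN.
  - simpl in HN. lia.
  - assert (Hsum_t : (list_sum a < t)%nat).
    { destruct (Nat.lt_ge_cases (list_sum a) t) as [|Hge]; auto.
      exfalso. apply Htn, IH. lia. }
    assert (Hb_t : (b <= t)%nat).
    { destruct (Nat.le_gt_cases b t) as [|Hgt]; auto.
      exfalso. apply Htn. exact (represents_app_large m a b t Hm Hgt Hrep). }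
    rewrite list_sum_app in HN. simpl in HN.
    destruct (Nat.lt_ge_cases N t).
    + apply represents_app_0, Htr. lia.
    + replace N with ((N - b) + b)%nat by lia. apply represents_app_1.
      destruct (Nat.eq_dec (N - b) 0) as [E|E].
      * rewrite E. apply represents_0.
      * apply Htr. lia.
Qed.

Lemma escalator_node_is_form (m : nat) (a : list nat) :
  escalator_node m a -> is_form a.
Proof.
  intro Hnode. induction Hnode as [|a t b _ [Hpos Hsort] _ _ Hb Hin _].
  - split; simpl; intros; [contradiction | lia].
  - split.
    + intros k Hk. apply in_app_or in Hk as [Hk|[<-|[]]]; auto.
    + intros i Hi. rewrite length_app in Hi. simpl in Hi.
      destruct (Nat.lt_ge_cases (S i) (length a)).
      * rewrite !app_nth1 by lia. auto.
      * rewrite app_nth1 by lia. rewrite app_nth2 by lia.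
        replace (S i - length a)%nat with 0%nat by lia. simpl.
        apply Hin, nth_In. lia.
Qed.

Lemma is_form_monotone (a : list nat) : is_form a ->
  forall i j, (i <= j < length a)%nat -> (nth i a 0 <= nth j a 0)%nat.
Proof.
  intros [_ Hsort] i j Hij. induction j as [|j IH].
  - replace i with 0%nat by lia. lia.
  - destruct (Nat.eq_dec i (S j)) as [->|]; [lia|].
    pose proof (Hsort j ltac:(lia)). pose proof (IH ltac:(lia)). lia.
Qed.

Lemma list_sum_lower_bound (s : list nat) (p : nat) (c : R) :
  (p <= length s)%nat ->
  (forall k, In k s -> (1 <= k)%nat) ->
  (forall i, (p <= i < length s)%nat -> c <= INR (nth i s 0%nat)) ->
  INR p + (INR (length s) - INR p) * c <= INR (list_sum s).
Proof.
  revert p. induction s as [|k s IH]; intros p Hp Hpos Hc; simpl length in *.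
  - replace p with 0%nat by lia. simpl. lra.
  - simpl list_sum. rewrite plus_INR, S_INR.
    assert (Hk : 1 <= INR k) by (apply (le_INR 1); apply Hpos; left; auto).
    destruct p as [|p].
    + pose proof (Hc 0%nat ltac:(lia)) as Hc0. simpl in Hc0.
      pose proof (IH 0%nat ltac:(lia) ltac:(intros; apply Hpos; right; auto)
        ltac:(intros i Hi; apply (Hc (S i)); lia)) as IHs.
      simpl (INR 0) in *. lra.
    + pose proof (IH p ltac:(lia) ltac:(intros; apply Hpos; right; auto)
        ltac:(intros i Hi; apply (Hc (S i)); lia)) as IHs.
      rewrite S_INR. lra.
Qed.

Lemma parent_sum_lower_bound (a : list nat) (b p : nat) (c : R) :
  is_form (a ++ [b]) -> (p <= length a)%nat ->
  c <= INR (nth p (a ++ [b]) 0%nat) ->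
  INR p + (INR (length a) - INR p) * c <= INR (list_sum a).
Proof.
  intros Hform Hp Hc. apply list_sum_lower_bound; [exact Hp | |].
  - intros k Hk. apply (proj1 Hform), in_or_app. auto.
  - intros i Hi.
    assert (Hmono := is_form_monotone _ Hform p i
                       ltac:(rewrite length_app; simpl; lia)).
    rewrite (app_nth1 _ _ _ (proj2 Hi)) in Hmono.
    apply le_INR in Hmono. lra.
Qed.

Lemma l_m_bound (C : R) (m : nat) : 0 < C + 1 -> (2 <= m)%nat ->
  INR (l_m C m) * (C + 1) <= INR m - 2.
Proof.
  intros HC Hm.
  set (x := (INR m - 2) / (C + 1)).
  assert (Hx : 0 <= x).
  { unfold x, Rdiv. apply Rmult_le_pos.
    - apply (le_INR 2) in Hm. simpl in Hm. lra.
    - left. apply Rinv_0_lt_compat. exact HC. }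
  assert (Hfloor : INR (l_m C m) <= x).
  { unfold l_m. fold x. destruct (base_Int_part x) as [Hle _].
    destruct (Z_lt_le_dec (Int_part x) 0) as [Hneg|Hnn].
    - replace (Z.to_nat (Int_part x)) with 0%nat by lia. simpl. lra.
    - rewrite INR_IZR_INZ, Z2Nat.id by lia. exact Hle. }
  apply (Rmult_le_compat_r (C + 1)) in Hfloor; [|lra].
  unfold x, Rdiv in Hfloor. rewrite Rmult_assoc, Rinv_l in Hfloor by lra. lra.
Qed.

Lemma nonuniversal_small_gap (C : R) (m : nat) (a : list nat) :
  standing_assumption C -> (3 <= m)%nat -> is_form a -> ~ universal m a ->
  exists N, (1 <= N)%nat /\ INR N <= C * (INR m - 2) /\ ~ represents m a N.
Proof.
  intros HC Hm Hform Hnu. apply NNPP. intro Hnone.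
  apply Hnu, (HC m a Hm Hform). intros N H1 H2.
  apply NNPP. intro Hnrep. apply Hnone. exists N. auto.
Qed.

Lemma leaf_length_arith (C M n l s : R) :
  0 < M -> 0 <= s -> l * (C + 1) <= M -> n * (C + 1) - l * C <= s ->
  s + 1 <= C * M ->
  n + 1 <= (1 - 1 / (C + 1) ^ 2) * M + (C + 2) / (C + 1).
Proof.
  intros HM Hs Hl Hn HsM.
  assert (HC : 0 < C) by nra.
  assert (Hk : n * (C + 1) ^ 2 <= C * (C + 2) * M) by nra.
  apply (Rmult_le_reg_r ((C + 1) ^ 2)); [nra|].
  replace (((1 - 1 / (C + 1) ^ 2) * M + (C + 2) / (C + 1)) * (C + 1) ^ 2)
    with (C * (C + 2) * M + (C + 2) * (C + 1)) by (field; lra).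
  nra.
Qed.

Theorem lemma4p3 (C : R) (HC : standing_assumption C) (m : nat) (a : list nat) :
  (3 <= m)%nat ->
  INR m > 6 * C ^ 2 * (C + 1) ->
  escalator_leaf m a ->
  (l_m C m <= length a)%nat ->
  INR (nth (l_m C m - 1) a 0%nat) >= C + 1 ->
  INR (length a) <= (1 - 1 / (C + 1) ^ 2) * (INR m - 2) + (C + 2) / (C + 1).
Proof.
  intros Hm _ [Hnode Huniv] Hl Hal.
  pose proof (escalator_node_is_form m a Hnode) as Hform.
  (* The root is not universal, so the leaf is a child a' ++ [b]. *)
  inversion Hnode as [Hroot | a' t b Hnode' Hnu _ _ _ _ Ha]; subst a.
  { destruct (Huniv 1%nat ltac:(lia)) as [[|] [_ Hv]]; discriminate. }
  destruct (nonuniversal_small_gap C m a' HC Hm (escalator_node_is_form m a' Hnode') Hnu)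
    as [N [HN1 [HNC HNrep]]].
  assert (Hsum_N : (S (list_sum a') <= N)%nat).
  { destruct (Nat.lt_ge_cases (list_sum a') N) as [|Hge]; [lia|].
    exfalso. apply HNrep, (escalator_node_covers m a' Hm Hnode'). lia. }
  apply le_INR in Hsum_N. rewrite S_INR in Hsum_N.
  rewrite length_app in Hl |- *. simpl length in *.
  assert (Hsum_lb := parent_sum_lower_bound a' b (l_m C m - 1) (C + 1) Hform
                      ltac:(lia) ltac:(lra)).
  assert (Hp : INR (l_m C m - 1) <= INR (l_m C m)) by (apply le_INR; lia).
  assert (HM : 1 <= INR m - 2) by (apply (le_INR 3) in Hm; simpl in Hm; lra).
  assert (HCpos : 0 < C) by (pose proof (pos_INR (list_sum a')); nra).
  rewrite plus_INR. simpl (INR 1).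
  apply (leaf_length_arith C (INR m - 2) _ (INR (l_m C m)) (INR (list_sum a')));
    try lra.
  - apply pos_INR.
  - apply l_m_bound; [lra | lia].
  - nra.
Qed.
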